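(* Let $(R,\mathfrak{m})$ satisfy condition $\bigstar$ with residue field $\mathbb{F}_q$, and let $V=\mathfrak{m}/(\mathfrak{m}^2+pR)$, an $\mathbb{F}_q$-vector space. Assume $V\neq 0$. Then there is a bijection between the codimension-one $\mathbb{F}_q$-subspaces $W$ of $V$ and the maximal subrings $S$ of $R$ having the same residue field as $R$, given by $S\mapsto \mathfrak{m}_S/(\mathfrak{m}^2+pR)$, with inverse $W\mapsto \bar{T}(R)+I_W$, where $I_W$ is the ideal of $R$ with $\mathfrak{m}^2+pR\subseteq I_W\subseteq\mathfrak{m}$ and $I_W/(\mathfrak{m}^2+pR)=W$.
   Context: All rings are commutative and unital. Condition $\bigstar$ on a ring $(R,\mathfrak{m})$: $R$ is a local ring (unique maximal ideal $\mathfrak{m}$, not necessarily Noetherian) of characteristic $p^N$ for a prime $p$ and some $N\ge 1$, with finite residue field $R/\mathfrak{m}\cong\mathbb{F}_q$, and $\mathfrak{m}$ is a nilpotent ideal. $T(R)$ is the unique subgroup of $R^\times$ mapping isomorphically onto $\mathbb{F}_q^\times$ under reduction mod $\mathfrak{m}$, and $\bar{T}(R)=T(R)\cup\{0\}$. $V$ is an $R/\mathfrak{m}$-vector space since it is an $R$-module annihilated by $\mathfrak{m}$. A subring $S$ is local with $\mathfrak{m}_S=\mathfrak{m}\cap S$, and its residue field is naturally a subfield of $R/\mathfrak{m}$; a ''maximal subring with the same residue field as $R$'' is a proper subring with residue field $\mathbb{F}_q$ not properly contained in any other proper subring of $R$. *)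

From HB Require Import structures.
From mathcomp Require Import all_boot all_order all_algebra.
Set Implicit Arguments. Unset Strict Implicit. Unset Printing Implicit Defensive.
Import GRing.Theory.
Local Open Scope ring_scope.

Section Defs.
Variable R : comNzRingType.

Definition subsetR (A B : R -> Prop) : Prop := forall x, A x -> B x.
Definition eqsetR (A B : R -> Prop) : Prop := forall x, A x <-> B x.

Definition is_unit (x : R) : Prop := exists y, x * y = 1.

Definition is_ideal (I : R -> Prop) : Prop :=
  [/\ I 0, (forall x y, I x -> I y -> I (x + y)) & (forall r x, I x -> I (r * x))].

Definition is_maximal_ideal (M : R -> Prop) : Prop :=
  [/\ is_ideal M, ~ M 1 &
      forall J, is_ideal J -> ~ J 1 -> subsetR M J -> subsetR J M].

Definition is_local (m : R -> Prop) : Prop :=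
  is_maximal_ideal m /\ forall M, is_maximal_ideal M -> eqsetR M m.

Definition has_char (n : nat) : Prop := forall k : nat, (k%:R == 0 :> R) <-> (n %| k)%N.

(* R/m is finite with exactly q elements: a complete irredundant system of
   representatives of R modulo m has q elements *)
Definition residue_card (m : R -> Prop) (q : nat) : Prop :=
  exists s : seq R, [/\ size s = q,
    (forall i j, (i < q)%N -> (j < q)%N -> m (s`_i - s`_j) -> i = j) &
    (forall x, exists2 i, (i < q)%N & m (x - s`_i))].

Definition nilpotent_ideal (m : R -> Prop) : Prop :=
  exists n : nat, forall s : seq R, size s = n -> (forall x, x \in s -> m x) ->
    \prod_(x <- s) x = 0.

Definition cond_star (m : R -> Prop) (p q : nat) : Prop :=
  [/\ is_local m, prime p, (exists2 N, (1 <= N)%N & has_char (p ^ N)),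
      residue_card m q & nilpotent_ideal m].

Definition m2pR (m : R -> Prop) (p : nat) : R -> Prop := fun x =>
  exists (s : seq (R * R)) (r : R),
    (forall ab, ab \in s -> m ab.1 /\ m ab.2) /\
    x = \sum_(ab <- s) ab.1 * ab.2 + p%:R * r.

(* Teichmüller subgroup: a subgroup of R^x mapping isomorphically onto
   (R/m)^x under reduction mod m *)
Definition is_teich (m : R -> Prop) (T : R -> Prop) : Prop :=
  [/\ subsetR T is_unit, T 1, (forall x y, T x -> T y -> T (x * y)),
      (forall x, T x -> exists2 y, T y & x * y = 1) &
      (forall x, ~ m x -> exists t, (T t /\ m (x - t)) /\
                          forall t', T t' -> m (x - t') -> t' = t)].

Definition Tbar (T : R -> Prop) : R -> Prop := fun x => T x \/ x = 0.

Definition is_subring (S : R -> Prop) : Prop :=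
  [/\ S 1, (forall x y, S x -> S y -> S (x - y)) & (forall x y, S x -> S y -> S (x * y))].

Definition proper_subring (S : R -> Prop) : Prop :=
  is_subring S /\ exists x, ~ S x.

(* residue field of S (= S/(m ∩ S), a subfield of R/m) is all of R/m *)
Definition same_residue_field (m S : R -> Prop) : Prop :=
  forall x, exists2 s, S s & m (x - s).

Definition maximal_subring_same_residue (m S : R -> Prop) : Prop :=
  [/\ proper_subring S, same_residue_field m S &
      forall S', proper_subring S' -> subsetR S S' -> subsetR S' S].

(* Codimension-one F_q-subspaces W of V = m/(m^2+pR), represented by their
   preimage I_W: ideals with m^2+pR ⊆ I ⊆ m and dim_{R/m} (m/I) = 1. *)
Definition codim1_ideal (m : R -> Prop) (p : nat) (I : R -> Prop) : Prop :=
  [/\ is_ideal I, subsetR (m2pR m p) I, subsetR I m &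
      exists x0, [/\ m x0, ~ I x0 &
        forall x, m x -> exists r i, I i /\ x = r * x0 + i]].

(* S |-> m_S/(m^2+pR), represented by its preimage (m ∩ S) + (m^2+pR) *)
Definition phi_map (m : R -> Prop) (p : nat) (S : R -> Prop) : R -> Prop :=
  fun x => exists s j, [/\ m s, S s, m2pR m p j & x = s + j].

Definition psi_map (T I : R -> Prop) : R -> Prop :=
  fun x => exists t i, [/\ Tbar T t, I i & x = t + i].

End Defs.

(* Write J = m^2 + pR.  Every t in T(R) satisfies t^(p^k) = t for some k > 0,
   so the congruence (x + y)^(p^k) = x^(p^k) + y^(p^k) mod pR shows that
   Tbar(R) + J is closed under addition, and that a subring with residue field
   F_q containing J contains T(R).  A maximal such subring S contains J:
   otherwise S + J = R, and successive approximation modulo the powers of the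
   nilpotent ideal m gives S = R.  For x0 in m outside S, maximality gives
   S + S x0 = R, so m ∩ S is an ideal of codimension one in m over J, and
   S = Tbar(R) + (m ∩ S).  Conversely Tbar(R) + I is a proper subring, and a
   subring strictly containing it contains x0 (up to a unit of T(R)), hence is R. *)

From HB Require Import structures.
From mathcomp Require Import all_boot all_order all_algebra.
From mathcomp Require Import ring.
From Stdlib Require Import Classical ClassicalEpsilon.
Set Implicit Arguments. Unset Strict Implicit. Unset Printing Implicit Defensive.
Import GRing.Theory.
Local Open Scope ring_scope.

Section RingFacts.
Variable R : comNzRingType.

Lemma exprD_modp (p : nat) (a b : R) : prime p ->
  exists r, (a + b) ^+ p = a ^+ p + b ^+ p + p%:R * r.
Proof.
case: p => [|[|p]] // pp.
exists (\sum_(i < p.+1) a ^+ (p.+2 - i.+1) * b ^+ i.+1 *+ ('C(p.+2, i.+1) %/ p.+2)).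
rewrite exprDn big_ord_recl big_ord_recr /= subn0 expr0 mulr1 bin0 mulr1n.
rewrite subnn expr0 mul1r binn mulr1n -addrA; congr (_ + _); rewrite addrC; congr (_ + _).
rewrite mulr_sumr; apply: eq_bigr => i _ /=.
rewrite mulr_natl -mulrnA divnK //; apply: prime_dvd_bin => //.
by rewrite /= ltnS ltn_ord.
Qed.

Lemma exprD_modp_expn (p k : nat) (a b : R) : prime p ->
  exists r, (a + b) ^+ (p ^ k) = a ^+ (p ^ k) + b ^+ (p ^ k) + p%:R * r.
Proof.
move=> pp; elim: k => [|k [r IH]].
  by exists 0; rewrite expn0 !expr1 mulr0 addr0.
rewrite expnSr !exprM IH.
have [r1 ->] := exprD_modp (a ^+ (p ^ k) + b ^+ (p ^ k)) (p%:R * r) pp.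
have [r2 ->] := exprD_modp (a ^+ (p ^ k)) (b ^+ (p ^ k)) pp.
exists (r2 + p%:R ^+ p.-1 * r ^+ p + r1).
have Ep : p%:R ^+ p = p%:R * p%:R ^+ p.-1 :> R by rewrite -exprS prednK ?prime_gt0.
by rewrite exprMn Ep; ring.
Qed.

Lemma expr_period_mul (p k j : nat) (t : R) :
  t ^+ (p ^ k) = t -> t ^+ (p ^ (k * j)) = t.
Proof.
move=> E; elim: j => [|j IH]; first by rewrite muln0 expn0 expr1.
by rewrite mulnS expnD exprM E IH.
Qed.

Section Ideal.
Variable I : R -> Prop.
Hypothesis HI : is_ideal I.

Lemma ideal0 : I 0. Proof. by case: HI. Qed.

Lemma idealD x y : I x -> I y -> I (x + y). Proof. by case: HI => _ HD _; apply: HD. Qed.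

Lemma idealMl r x : I x -> I (r * x). Proof. by case: HI => _ _ HM; apply: HM. Qed.

Lemma idealMr r x : I x -> I (x * r). Proof. by rewrite mulrC; apply: idealMl. Qed.

Lemma idealN x : I x -> I (- x). Proof. by rewrite -mulN1r; apply: idealMl. Qed.

Lemma idealB x y : I x -> I y -> I (x - y).
Proof. by move=> Ix Iy; apply: idealD => //; apply: idealN. Qed.

Lemma ideal_sum (s : seq (R * R)) (F : R * R -> R) :
  (forall ab, ab \in s -> I (F ab)) -> I (\sum_(ab <- s) F ab).
Proof. by move=> HF; rewrite big_seq; apply: big_ind => //; [exact: ideal0 | exact: idealD]. Qed.

End Ideal.

Section Subring.
Variable S : R -> Prop.
Hypothesis HS : is_subring S.

Lemma subring1 : S 1. Proof. by case: HS. Qed.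

Lemma subringB x y : S x -> S y -> S (x - y). Proof. by case: HS => _ HB _; apply: HB. Qed.

Lemma subringM x y : S x -> S y -> S (x * y). Proof. by case: HS => _ _ HM; apply: HM. Qed.

Lemma subring0 : S 0. Proof. by rewrite -(subrr 1); apply: subringB; exact: subring1. Qed.

Lemma subringN x : S x -> S (- x). Proof. by rewrite -sub0r; apply: subringB; exact: subring0. Qed.

Lemma subringD x y : S x -> S y -> S (x + y).
Proof. by move=> Sx Sy; rewrite -[y]opprK; apply: subringB => //; apply: subringN. Qed.

Lemma subringX x n : S x -> S (x ^+ n).
Proof.
move=> Sx; elim: n => [|n IH]; first by rewrite expr0; exact: subring1.
by rewrite exprS; apply: subringM.
Qed.

Lemma subring_nat n : S n%:R.
Proof.
elim: n => [|n IH]; first exact: subring0.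
by rewrite mulrS; apply: subringD => //; exact: subring1.
Qed.

End Subring.

Definition addset (A B : R -> Prop) : R -> Prop :=
  fun x => exists a b, [/\ A a, B b & x = a + b].

Lemma addset_subring (S I : R -> Prop) :
  is_subring S -> is_ideal I -> is_subring (addset S I).
Proof.
move=> HS HI; split.
- by exists 1, 0; split; [exact: subring1 | exact: ideal0 | rewrite addr0].
- move=> _ _ [s1 [i1 [S1 I1 ->]]] [s2 [i2 [S2 I2 ->]]].
  exists (s1 - s2), (i1 - i2); split; [exact: subringB | exact: idealB | ring].
- move=> _ _ [s1 [i1 [S1 I1 ->]]] [s2 [i2 [S2 I2 ->]]].
  exists (s1 * s2), (s1 * i2 + i1 * (s2 + i2)); split; [exact: subringM | | ring].
  by apply: idealD => //; [exact: idealMl | exact: idealMr].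
Qed.

End RingFacts.

Section LocalRing.
Variables (R : comNzRingType) (m : R -> Prop) (p : nat).
Hypothesis Hmax : is_maximal_ideal m.
Hypothesis pp : prime p.
Hypothesis mp : m p%:R.

Let Hm : is_ideal m. Proof. by case: Hmax. Qed.

Lemma maximal_ideal_prime a b : m (a * b) -> m a \/ m b.
Proof.
case: Hmax => _ m1 mmax mab; case: (classic (m a)) => ma; [by left | right].
pose J x := exists y r, m y /\ x = y + r * a.
have HJ : is_ideal J.
  split.
  - by exists 0, 0; rewrite mul0r addr0; split => //; exact: (ideal0 Hm).
  - move=> _ _ [y1 [r1 [m1y ->]]] [y2 [r2 [m2y ->]]].
    by exists (y1 + y2), (r1 + r2); split; [exact: (idealD Hm) | ring].
  - move=> r _ [y [s [my ->]]].
    by exists (r * y), (r * s); split; [exact: (idealMl Hm) | ring].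
case: (classic (J 1)) => [[y [r [my E]]] | nJ1].
  have -> : b = y * b + r * (a * b) by rewrite mulrA -mulrDl -E mul1r.
  by apply: (idealD Hm) => //; [exact: (idealMr Hm) | exact: (idealMl Hm)].
exfalso; apply: ma; apply: (mmax J HJ nJ1).
  by move=> x mx; exists x, 0; rewrite mul0r addr0.
by exists 0, 1; rewrite mul1r add0r; split => //; exact: (ideal0 Hm).
Qed.

Lemma maximal_idealX x n : m (x ^+ n) -> m x.
Proof.
elim: n => [|n IH]; first by rewrite expr0 => m1; case: Hmax => _ /(_ m1).
by rewrite exprS => /maximal_ideal_prime [].
Qed.

(* (a - b)^(p^k) = a^(p^k) - b^(p^k) mod pR, and m is prime. *)
Lemma maximal_ideal_subX_expn k a b : m (a ^+ (p ^ k) - b ^+ (p ^ k)) -> m (a - b).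
Proof.
have [r Er] := exprD_modp_expn k (a - b) b pp; rewrite subrK in Er.
move=> mab; apply: (@maximal_idealX _ (p ^ k)).
have -> : (a - b) ^+ (p ^ k) = a ^+ (p ^ k) - b ^+ (p ^ k) - p%:R * r.
  by rewrite Er; ring.
by apply: (idealB Hm) => //; exact: (idealMr Hm).
Qed.

Lemma m2pR_ideal : is_ideal (m2pR m p).
Proof.
split.
- by exists [::], 0; split => //; rewrite big_nil mulr0 addr0.
- move=> _ _ [s1 [r1 [H1 ->]]] [s2 [r2 [H2 ->]]]; exists (s1 ++ s2), (r1 + r2); split.
    by move=> ab; rewrite mem_cat => /orP [/H1|/H2].
  by rewrite big_cat /=; ring.
- move=> r _ [s [r1 [H ->]]]; exists [seq (r * ab.1, ab.2) | ab <- s], (r * r1); split.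
    by move=> _ /mapP [ab /H [h1 h2] ->]; split => //; exact: (idealMl Hm).
  rewrite big_map mulrDr mulr_sumr mulrCA; congr (_ + _).
  by apply: eq_bigr => ab _ /=; rewrite mulrA.
Qed.

Lemma m2pR_sub_m : subsetR (m2pR m p) m.
Proof.
move=> _ [s [r [H ->]]]; apply: (idealD Hm) => //; last exact: (idealMr Hm).
by apply: (ideal_sum Hm) => // ab /H [ma _]; exact: (idealMr Hm).
Qed.

Lemma m2pR_mul a b : m a -> m b -> m2pR m p (a * b).
Proof.
move=> ma mb; exists [:: (a, b)], 0; split; last by rewrite big_seq1 mulr0 addr0.
by move=> ab; rewrite inE => /eqP ->.
Qed.

Lemma m2pR_natM r : m2pR m p (p%:R * r).
Proof. by exists [::], r; split => //; rewrite big_nil add0r. Qed.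

Lemma m2pR_expr u n : m u -> (1 < n)%N -> m2pR m p (u ^+ n).
Proof.
move=> mu; case: n => [|[|n]] // _; rewrite exprS; apply: m2pR_mul => //.
by rewrite exprS; exact: (idealMr Hm).
Qed.

Fixpoint mpow (k : nat) : R -> Prop :=
  if k is k'.+1 then fun x => exists s : seq (R * R),
    (forall ab, ab \in s -> m ab.1 /\ mpow k' ab.2) /\ x = \sum_(ab <- s) ab.1 * ab.2
  else fun _ => True.

Lemma mpow_ideal k : is_ideal (mpow k).
Proof.
case: k => [|k] //; split.
- by exists [::]; rewrite big_nil.
- move=> _ _ [s1 [H1 ->]] [s2 [H2 ->]]; exists (s1 ++ s2); rewrite big_cat; split => //.
  by move=> ab; rewrite mem_cat => /orP [/H1|/H2].
- move=> r _ [s [H ->]]; exists [seq (r * ab.1, ab.2) | ab <- s]; split.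
    by move=> _ /mapP [ab /H [h1 h2] ->]; split => //; exact: (idealMl Hm).
  by rewrite big_map mulr_sumr; apply: eq_bigr => ab _; rewrite mulrA.
Qed.

Lemma mpowMl k a x : m a -> mpow k x -> mpow k.+1 (a * x).
Proof.
move=> ma Hx; exists [:: (a, x)]; rewrite big_seq1; split => //.
by move=> ab; rewrite inE => /eqP ->.
Qed.

Lemma mpowS_sub_m k : subsetR (mpow k.+1) m.
Proof. by move=> _ [s [H ->]]; apply: (ideal_sum Hm) => ab /H [ma _]; exact: (idealMr Hm). Qed.

Lemma mpow_nilpotent : nilpotent_ideal m -> exists n, forall x, mpow n x -> x = 0.
Proof.
case=> n nil_n; exists n.
suff mpow_annihilates k : (k <= n)%N -> forall x, mpow k x ->
    forall s, size s = (n - k)%N -> (forall y, y \in s -> m y) -> x * \prod_(y <- s) y = 0.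
  move=> x /(mpow_annihilates n (leqnn n)) /(_ [::] (esym (subnn n))).
  by rewrite big_nil mulr1; apply.
elim: k => [_ x _ s|k IH k_lt_n _ [L [HL ->]] s size_s ms].
  by rewrite subn0 => /nil_n prod0 /prod0 ->; rewrite mulr0.
rewrite mulr_suml big1_seq // => ab /andP [_ /HL [ma Hb]].
rewrite mulrAC mulrC.
have -> : ab.1 * \prod_(y <- s) y = \prod_(y <- ab.1 :: s) y by rewrite big_cons.
apply: (IH (ltnW k_lt_n) _ Hb).
  by rewrite /= size_s subnSK.
by move=> y; rewrite inE => /orP [/eqP ->|/ms].
Qed.

Section Approximation.
Variable S : R -> Prop.
Hypothesis HS : is_subring S.

(* a * b - a' * b' = a * (b - b') + b' * (a - a'), with b' in m. *)
Lemma addset_mpowSS k : (forall x, addset S (mpow k.+1) x) ->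
  forall x, addset S (m2pR m p) x -> addset S (mpow k.+2) x.
Proof.
move=> approx _ [s0 [_ [Ss0 [L [r [HL ->]]] ->]]].
have approx_subring := addset_subring HS (mpow_ideal k.+2).
have in_S y : S y -> addset S (mpow k.+2) y.
  by move=> Sy; exists y, 0; split => //; [exact: ideal0 (mpow_ideal _) | rewrite addr0].
have lift y : exists s', [/\ S s', mpow k.+1 (y - s') & y = s' + (y - s')].
  by have [s' [d [Ss' Hd ->]]] := approx y; exists s'; rewrite addrC addKr.
apply: subringD => //; first exact: in_S.
apply: subringD => //.
  rewrite big_seq; apply: big_ind => [||[a b] /HL [ma mb]]; first exact: in_S (subring0 HS).
    by move=> ? ?; apply: subringD.
  have [a' [Sa' Ha ->]] := lift a; have [b' [Sb' Hb ->]] := lift b.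
  set alpha := a - a' in Ha *; set beta := b - b' in Hb *.
  have mb' : m b'.
    by have := idealB Hm mb (mpowS_sub_m Hb); rewrite /beta opprB addrC subrK.
  exists (a' * b'), ((a' + alpha) * beta + b' * alpha).
  split; [exact: subringM | | rewrite /=; ring].
  apply: (idealD (mpow_ideal _)); apply: mpowMl => //.
  by rewrite /alpha addrC subrK.
have [r' [Sr' Hr ->]] := lift r.
exists (p%:R * r'), (p%:R * (r - r')); split; [| exact: mpowMl | by rewrite mulrDr].
by apply: subringM => //; exact: subring_nat.
Qed.

Lemma subring_eq_ring_mod_m2pR : nilpotent_ideal m -> same_residue_field m S ->
  (forall x, addset S (m2pR m p) x) -> forall x, S x.
Proof.
move=> /mpow_nilpotent [n mpow_n] HSR SJ.
have approx k x : addset S (mpow k) x.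
  elim: k x => [x|[|k] IH x]; first by exists 0, x; split; rewrite ?add0r //; exact: subring0.
    have [s Ss mxs] := HSR x; exists s, (x - s); split; rewrite ?[s + _]addrC ?subrK //.
    by rewrite -[x - s]mulr1; apply: mpowMl.
  exact: addset_mpowSS.
by move=> x; have [s [y [Ss /mpow_n -> ->]]] := approx n x; rewrite addr0.
Qed.

End Approximation.

Section Teichmuller.
Variables (T : R -> Prop) (q : nat).
Hypothesis HT : is_teich m T.
Hypothesis rc : residue_card m q.

Lemma teich_notin_m t : T t -> ~ m t.
Proof.
case: HT => unitT _ _ _ _ Tt mt; have [y ty1] := unitT t Tt.
by case: Hmax => _ m1 _; apply: m1; rewrite -ty1; exact: (idealMr Hm).
Qed.

Lemma teich_inj_mod a b : T a -> T b -> m (a - b) -> a = b.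
Proof.
move=> Ta Tb mab; case: HT => _ _ _ _ /(_ a (teich_notin_m Ta)) [t [_ U]].
by rewrite (U a Ta) ?(U b Tb mab) // subrr; exact: (ideal0 Hm).
Qed.

Lemma teichX t n : T t -> T (t ^+ n).
Proof.
case: HT => _ T1 TM _ _ Tt; elim: n => [|n IH]; first by rewrite expr0.
by rewrite exprS; apply: TM.
Qed.

Lemma Tbar_lift x : exists t, Tbar T t /\ m (x - t).
Proof.
have [mx | nmx] := classic (m x); first by exists 0; split; [right | rewrite subr0].
by case: HT => _ _ _ _ /(_ x nmx) [t [[Tt mxt] _]]; exists t; split => //; left.
Qed.

Lemma TbarM a b : Tbar T a -> Tbar T b -> Tbar T (a * b).
Proof.
case: HT => _ _ TM _ _ [Ta|->] [Tb|->]; rewrite /Tbar ?mul0r ?mulr0; try by right.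
by left; apply: TM.
Qed.

Lemma TbarX t n : Tbar T t -> (0 < n)%N -> Tbar T (t ^+ n).
Proof.
case=> [Tt|->] n_gt0; first by left; exact: teichX.
by right; rewrite expr0n eqn0Ngt n_gt0.
Qed.

Lemma residue_pigeonhole (f : nat -> R) : exists i j, (i < j)%N /\ m (f i - f j).
Proof.
case: rc => s [_ _ Hs].
have [g Hg] : exists g : nat -> nat, forall a, (g a < q)%N /\ m (f a - s`_(g a)).
  by apply: (ClassicalEpsilon.choice (fun a i => (i < q)%N /\ m (f a - s`_i))) => a;
    case: (Hs (f a)) => i; exists i.
have : ~~ uniq (map g (iota 0 q.+1)).
  apply/negP => Ug; suff : (q.+1 <= q)%N by rewrite ltnn.
  rewrite -[X in (X <= _)%N](size_iota 0) -(size_map g) -[q in (_ <= q)%N](size_iota 0).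
  by apply: uniq_leq_size => // _ /mapP [a _ ->]; rewrite mem_iota add0n; case: (Hg a).
case/(uniqPn 0%N) => i [j [ij]]; rewrite size_map size_iota => jq.
rewrite !(nth_map 0%N) ?size_iota ?(ltn_trans ij) // !nth_iota ?(ltn_trans ij) // !add0n.
move=> gij; exists i, j; split => //.
have [_ mi] := Hg i; have [_ mj] := Hg j; rewrite gij in mi.
by have := idealB Hm mi mj; rewrite opprB addrA subrK.
Qed.

(* Two of the residues of t^(p^a), a <= q, coincide; then cancel the smaller p-power. *)
Lemma teich_period t : T t -> exists2 k, (0 < k)%N & t ^+ (p ^ k) = t.
Proof.
move=> Tt; have [i [j [ij mij]]] := residue_pigeonhole (fun a => t ^+ (p ^ a)).
exists (j - i)%N; first by rewrite subn_gt0.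
apply: teich_inj_mod; [exact: teichX | by [] |].
apply: (@maximal_ideal_subX_expn i).
by rewrite -exprM -expnD subnK ?(ltnW ij) // -opprB; exact: (idealN Hm).
Qed.

Lemma Tbar_period t : Tbar T t -> exists2 k, (0 < k)%N & t ^+ (p ^ k) = t.
Proof.
case=> [|->]; first exact: teich_period.
by exists 1%N; rewrite // expn1 expr0n; case: eqP => // p0; move: pp; rewrite p0.
Qed.

(* Raise t1 + t2 = t3 + u (t3 in Tbar, u in m) to a common period P of t1 and t2:
   modulo m^2 + pR, t1 + t2 = (t1 + t2)^P = t3^P + u^P = t3^P. *)
Lemma TbarD_mod_m2pR t1 t2 : Tbar T t1 -> Tbar T t2 -> psi_map T (m2pR m p) (t1 + t2).
Proof.
move=> T1 T2.
have [k1 k1_gt0 E1] := Tbar_period T1; have [k2 k2_gt0 E2] := Tbar_period T2.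
move/(expr_period_mul k2): E1 => E1; move/(expr_period_mul k1): E2 => E2.
rewrite mulnC in E2; set P := (p ^ (k1 * k2))%N in E1 E2.
have P_gt1 : (1 < P)%N by rewrite -(expn0 p) ltn_exp2l ?prime_gt1 ?muln_gt0 ?k1_gt0.
have [t3 [T3 mu]] := Tbar_lift (t1 + t2); set u := t1 + t2 - t3 in mu.
have [r Er] := exprD_modp_expn (k1 * k2) t1 t2 pp.
have [r' Er'] := exprD_modp_expn (k1 * k2) t3 u pp.
rewrite -/P E1 E2 in Er; rewrite -/P /u addrC subrK Er in Er'.
exists (t3 ^+ P), (u ^+ P + p%:R * r' - p%:R * r); split.
- exact: TbarX (ltnW P_gt1).
- have HJ := m2pR_ideal.
  apply: (idealB HJ); last exact: m2pR_natM.
  by apply: (idealD HJ); [exact: m2pR_expr | exact: m2pR_natM].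
- have -> : t1 + t2 = t1 + t2 + p%:R * r - p%:R * r by ring.
  by rewrite Er'; ring.
Qed.

Section TbarPlusIdeal.
Variable I : R -> Prop.
Hypothesis HI : is_ideal I.
Hypothesis m2pR_sub_I : subsetR (m2pR m p) I.

Lemma psi_map_Tbar t : Tbar T t -> psi_map T I t.
Proof. by move=> Tt; exists t, 0; split; rewrite ?addr0 //; exact: (ideal0 HI). Qed.

Lemma psi_map_ideal i : I i -> psi_map T I i.
Proof. by move=> Ii; exists 0, i; split; rewrite ?add0r //; right. Qed.

Lemma psi_mapD x y : psi_map T I x -> psi_map T I y -> psi_map T I (x + y).
Proof.
move=> [t1 [i1 [T1 I1 ->]]] [t2 [i2 [T2 I2 ->]]].
have [t3 [j [T3 J3 E]]] := TbarD_mod_m2pR T1 T2.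
exists t3, (j + (i1 + i2)); split => //; last by rewrite addrACA E -addrA.
by apply: (idealD HI); [exact: m2pR_sub_I | exact: idealD].
Qed.

(* -t = (p - 1) t - p t, with p t in m^2 + pR. *)
Lemma psi_mapN x : psi_map T I x -> psi_map T I (- x).
Proof.
move=> [t [i [Tt Ii ->]]].
have tn n : psi_map T I (t *+ n).
  elim: n => [|n IH]; first by rewrite mulr0n; apply: psi_map_ideal; exact: (ideal0 HI).
  by rewrite mulrS; apply: psi_mapD => //; exact: psi_map_Tbar.
have [t' [i' [T' I' E]]] := tn p.-1.
exists t', (i' - p%:R * t - i); split => //.
  by apply: (idealB HI) => //; apply: (idealB HI) => //; apply: m2pR_sub_I; exact: m2pR_natM.
have tp : p%:R * t = t *+ p.-1 + t by rewrite mulr_natl -mulrSr prednK ?prime_gt0.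
rewrite [RHS](_ : _ = t' + i' - p%:R * t - i); last by ring.
by rewrite -E tp; ring.
Qed.

Lemma psi_map_subring : is_subring (psi_map T I).
Proof.
split.
- by apply: psi_map_Tbar; left; case: HT.
- by move=> x y Sx Sy; apply: psi_mapD => //; exact: psi_mapN.
- move=> _ _ [t1 [i1 [T1 I1 ->]]] [t2 [i2 [T2 I2 ->]]].
  exists (t1 * t2), (t1 * i2 + i1 * (t2 + i2)); split; [exact: TbarM | | ring].
  by apply: (idealD HI); [exact: idealMl | exact: idealMr].
Qed.

End TbarPlusIdeal.

Section MaximalSubring.
Variable S : R -> Prop.
Hypothesis m_nilpotent : nilpotent_ideal m.
Hypothesis HSmax : maximal_subring_same_residue m S.

Let HS : is_subring S. Proof. by case: HSmax => [[]]. Qed.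

Lemma m2pR_sub_maximal_subring : subsetR (m2pR m p) S.
Proof.
case: HSmax => [[_ [w Sw]] HSR Smax].
have [SJ_all | /not_all_ex_not SJ_proper] := classic (forall x, addset S (m2pR m p) x).
  by case: Sw; exact: subring_eq_ring_mod_m2pR HS m_nilpotent HSR SJ_all w.
move=> j Jj; apply: (Smax _ (conj (addset_subring HS m2pR_ideal) SJ_proper)).
  by move=> s Ss; exists s, 0; split; rewrite ?addr0 //; exact: ideal0 m2pR_ideal.
by exists 0, j; split; rewrite ?add0r //; exact: (subring0 HS).
Qed.

Lemma phi_mapE x : phi_map m p S x <-> m x /\ S x.
Proof.
split=> [[s [j [ms Ss Jj ->]]] | [mx Sx]].
  split; first by apply: (idealD Hm) => //; exact: m2pR_sub_m.
  by apply: (subringD HS) => //; exact: m2pR_sub_maximal_subring.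
by exists x, 0; split; rewrite ?addr0 //; exact: ideal0 m2pR_ideal.
Qed.

(* Write t = s + u with s in S, u in m; then t = t^(p^k) = s^(p^k) + u^(p^k) mod pR. *)
Lemma Tbar_sub_maximal_subring t : Tbar T t -> S t.
Proof.
case=> [Tt|->]; last exact: (subring0 HS).
have [s Ss mts] : exists2 s, S s & m (t - s) by case: HSmax => _ HSR _; exact: HSR.
have [k k_gt0 Ek] := teich_period Tt.
have [r Er] := exprD_modp_expn k s (t - s) pp; rewrite addrC subrK Ek in Er.
have JS := m2pR_sub_maximal_subring.
rewrite Er; apply: (subringD HS) => //; last by apply: JS; exact: m2pR_natM.
apply: (subringD HS) => //; first exact: (subringX HS).
by apply: JS; apply: m2pR_expr; rewrite // -(expn0 p) ltn_exp2l ?prime_gt1.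
Qed.

Lemma maximal_subring_adjoin :
  exists x0, [/\ m x0, ~ S x0 & forall y, exists a b, [/\ S a, S b & y = a + b * x0]].
Proof.
case: HSmax => [[_ [w Sw]] HSR Smax].
have [s Ss mws] := HSR w.
have nSws : ~ S (w - s) by move=> Sws; apply: Sw; rewrite -(subrK s w); exact: (subringD HS).
pose A y := exists a b, [/\ S a, S b & y = a + b * (w - s)].
have JS := m2pR_sub_maximal_subring.
have HA : is_subring A.
  split.
  - by exists 1, 0; split; rewrite ?mul0r ?addr0 //; [exact: (subring1 HS) | exact: (subring0 HS)].
  - move=> _ _ [a1 [b1 [S1 T1 ->]]] [a2 [b2 [S2 T2 ->]]].
    by exists (a1 - a2), (b1 - b2); split; [exact: (subringB HS) | exact: (subringB HS) | ring].
  - move=> _ _ [a1 [b1 [S1 T1 ->]]] [a2 [b2 [S2 T2 ->]]].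
    exists (a1 * a2 + b1 * b2 * ((w - s) * (w - s))), (a1 * b2 + b1 * a2).
    split; [| by apply: (subringD HS); exact: (subringM HS) | ring].
    apply: (subringD HS); first exact: (subringM HS).
    by apply: (subringM HS); [exact: (subringM HS) | apply: JS; exact: m2pR_mul].
exists (w - s); split => // y; apply: NNPP => nAy.
apply: nSws; apply: (Smax A); first by split; [| exists y].
  by move=> a Sa; exists a, 0; split; rewrite ?mul0r ?addr0 //; exact: (subring0 HS).
by exists 0, 1; split; rewrite ?mul1r ?add0r //; [exact: (subring0 HS) | exact: (subring1 HS)].
Qed.

Lemma codim1_phi_map : codim1_ideal m p (phi_map m p S).
Proof.
have [x0 [mx0 nSx0 gen]] := maximal_subring_adjoin.
have JS := m2pR_sub_maximal_subring.
split.
- split.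
  + by apply/phi_mapE; split; [exact: (ideal0 Hm) | exact: (subring0 HS)].
  + move=> x y /phi_mapE [mx Sx] /phi_mapE [my Sy].
    by apply/phi_mapE; split; [exact: (idealD Hm) | exact: (subringD HS)].
  + move=> r x /phi_mapE [mx Sx]; apply/phi_mapE; split; first exact: (idealMl Hm).
    have [a [b [Sa Sb ->]]] := gen r.
    rewrite mulrDl -mulrA; apply: (subringD HS); first exact: (subringM HS).
    by apply: (subringM HS) => //; apply: JS; exact: m2pR_mul.
- by move=> j Jj; apply/phi_mapE; split; [exact: m2pR_sub_m | exact: JS].
- by move=> x /phi_mapE [].
- exists x0; split => //; first by case/phi_mapE.
  move=> y my; have [a [b [Sa Sb Ey]]] := gen y.
  exists b, a; split; last by rewrite Ey addrC.
  apply/phi_mapE; split => //.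
  have -> : a = y - b * x0 by rewrite Ey addrK.
  by apply: (idealB Hm) => //; exact: (idealMl Hm).
Qed.

Lemma psi_phi_map : eqsetR (psi_map T (phi_map m p S)) S.
Proof.
move=> x; split => [[t [i [Tt /phi_mapE [_ Si] ->]]] | Sx].
  by apply: (subringD HS) => //; exact: Tbar_sub_maximal_subring.
have [t [Tt mxt]] := Tbar_lift x.
exists t, (x - t); split; rewrite ?[t + _]addrC ?subrK //; apply/phi_mapE; split => //.
by apply: (subringB HS) => //; exact: Tbar_sub_maximal_subring.
Qed.

End MaximalSubring.

Section Codim1Ideal.
Variables (I : R -> Prop) (x0 : R).
Hypothesis HI : is_ideal I.
Hypothesis m2pR_sub_I : subsetR (m2pR m p) I.
Hypothesis I_sub_m : subsetR I m.
Hypothesis mx0 : m x0.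
Hypothesis nIx0 : ~ I x0.
Hypothesis gen : forall x, m x -> exists r i, I i /\ x = r * x0 + i.

Lemma psi_map_notin_m t i : Tbar T t -> I i -> m (t + i) -> t = 0.
Proof.
case=> [Tt|//] Ii mti; exfalso; apply: (teich_notin_m Tt).
by have := idealB Hm mti (I_sub_m Ii); rewrite addrK.
Qed.

Lemma subring_full_of_x0 S' : is_subring S' -> subsetR (psi_map T I) S' -> S' x0 -> forall z, S' z.
Proof.
move=> HS' psi_sub Sx0 z.
have [tz [Tz mz]] := Tbar_lift z; have [r [i [Ii Ez]]] := gen mz.
have [tr [Tr mr]] := Tbar_lift r.
have -> : z = tz + tr * x0 + ((r - tr) * x0 + i) by rewrite -(subrK tz z) Ez; ring.
have psiT t : Tbar T t -> S' t by move=> Tt; apply: psi_sub; exact: psi_map_Tbar.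
apply: (subringD HS').
  by apply: (subringD HS'); [exact: psiT | apply: (subringM HS') => //; exact: psiT].
apply: psi_sub; apply: psi_map_ideal; apply: (idealD HI) => //.
by apply: m2pR_sub_I; exact: m2pR_mul.
Qed.

(* If y = t + u lies outside Tbar + I, then u = r x0 + i with r a unit, and x0 is
   recovered from u. *)
Lemma x0_in_subring S' y : is_subring S' -> subsetR (psi_map T I) S' ->
  S' y -> ~ psi_map T I y -> S' x0.
Proof.
move=> HS' psi_sub Sy npsi_y.
have [t [Tt mu]] := Tbar_lift y; set u := y - t in mu.
have Su : S' u by apply: subringB => //; apply: psi_sub; exact: psi_map_Tbar.
have nIu : ~ I u by move=> Iu; apply: npsi_y; exists t, u; split; rewrite // /u addrC subrK.
have [ru [iu [Iiu Eu]]] := gen mu.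
have nmr : ~ m ru.
  move=> mr; apply: nIu; rewrite Eu; apply: (idealD HI) => //.
  by apply: m2pR_sub_I; exact: m2pR_mul.
case: HT => _ _ _ Tinv /(_ ru nmr) [t' [[T' mrt'] _]].
have [t'' T'' t't''] := Tinv t' T'.
have -> : x0 = t'' * u - t'' * ((ru - t') * x0) - t'' * iu.
  by rewrite Eu -[LHS]mul1r -t't''; ring.
have psiI j : I j -> S' j by move=> Ij; apply: psi_sub; exact: psi_map_ideal.
have S't'' : S' t'' by apply: psi_sub; apply: (psi_map_Tbar HI); left.
apply: (subringB HS'); last by apply: psiI; exact: (idealMl HI).
apply: (subringB HS'); first exact: (subringM HS').
by apply: psiI; apply: (idealMl HI); apply: m2pR_sub_I; exact: m2pR_mul.
Qed.

Lemma maximal_subring_psi_map : maximal_subring_same_residue m (psi_map T I).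
Proof.
have Hpsi := psi_map_subring HI m2pR_sub_I.
split.
- split => //; exists x0 => -[t [i [Tt Ii Ex0]]]; apply: nIx0.
  by rewrite Ex0 (psi_map_notin_m Tt Ii) -?Ex0 ?add0r.
- by move=> x; have [t [Tt mxt]] := Tbar_lift x; exists t => //; exact: psi_map_Tbar.
- move=> S' [HS' [w nS'w]] psi_sub y S'y; apply: NNPP => npsi_y; apply: nS'w.
  exact: subring_full_of_x0 HS' psi_sub (x0_in_subring HS' psi_sub S'y npsi_y) w.
Qed.

Lemma phi_psi_map : eqsetR (phi_map m p (psi_map T I)) I.
Proof.
move=> x; split => [[s [j [ms [t [i [Tt Ii Es]]] Jj ->]]] | Ix].
  rewrite Es (psi_map_notin_m Tt Ii) -?Es // add0r.
  by apply: (idealD HI) => //; exact: m2pR_sub_I.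
exists x, 0; split; rewrite ?addr0 //.
- exact: I_sub_m.
- exact: psi_map_ideal.
- exact: ideal0 m2pR_ideal.
Qed.

End Codim1Ideal.

End Teichmuller.
End LocalRing.

Theorem theorem28 (R : comNzRingType) (m : R -> Prop) (p q : nat)
  (T : R -> Prop)
  (Hstar : cond_star m p q)
  (HT : is_teich m T)
  (HV : exists x, m x /\ ~ m2pR m p x) :
  [/\ (forall S, maximal_subring_same_residue m S -> codim1_ideal m p (phi_map m p S)),
      (forall I, codim1_ideal m p I -> maximal_subring_same_residue m (psi_map T I)),
      (forall S, maximal_subring_same_residue m S -> eqsetR (psi_map T (phi_map m p S)) S) &
      (forall I, codim1_ideal m p I -> eqsetR (phi_map m p (psi_map T I)) I)].
Proof.
case: Hstar => [[Hmax _] pp [N _ charR] rc m_nilpotent].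
have mp : m p%:R.
  apply: (maximal_idealX Hmax (n := N)); rewrite -natrX.
  by have [_ /(_ (dvdnn _)) /eqP ->] := charR (p ^ N)%N; case: Hmax => [[]].
split=> [S HS | I [HI JI Im [x0 [mx0 nIx0 gen]]] | S HS | I [HI JI Im _]].
- exact: (codim1_phi_map Hmax mp m_nilpotent HS).
- exact: (maximal_subring_psi_map Hmax pp mp HT rc HI JI Im mx0 nIx0 gen).
- exact: (psi_phi_map Hmax pp mp HT rc m_nilpotent HS).
- exact: (phi_psi_map Hmax HT HI JI Im).
Qed.
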